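(* Let $B_J\in\mathbb R^{n\times n}$ be irreducible with $B_J\ge O$ elementwise, let $\mathcal B=(B_1,\dots,B_d)$ be a splitting of $B_J$, and assume $\lambda:=\rho(T(\mathcal B))>0$. Then $T(\mathcal B)$ has an elementwise positive eigenvector $[\alpha_1^T,\dots,\alpha_d^T]^T$ for the eigenvalue $\lambda$ such that, elementwise, $0<\lambda\alpha_1\le\alpha_d\le\alpha_{d-1}\le\cdots\le\alpha_2\le\alpha_1$ if $\lambda\le1$, and $0<\alpha_1\le\alpha_2\le\cdots\le\alpha_{d-1}\le\alpha_d\le\lambda\alpha_1$ if $\lambda\ge1$.
   Context: For $B\in\mathbb R^{n\times n}$, a splitting of $B$ of order $d\ge1$ is an ordered $d$-tuple $\mathcal B=(B_1,\dots,B_d)$ of real $n\times n$ matrices with $B_p\neq O$ for all $p$, $\sum_{p=1}^d B_p=B$, and $B_p\circ B_q=O$ (Hadamard product) for $p\ne q$. The iteration matrix of $\mathcal B$ is the $dn\times dn$ matrix $T(\mathcal B)=(I_{dn}-\mathcal L)^{-1}\mathcal U$, where $\mathcal L,\mathcal U$ are $d\times d$ block matrices with $n\times n$ blocks, $\mathcal L_{ij}=B_j$ if $i>j$ and $O$ otherwise, $\mathcal U_{ij}=B_j$ if $i\le j$ and $O$ otherwise. $\rho$ denotes spectral radius; inequalities are elementwise. *)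

From HB Require Import structures.
From mathcomp Require Import all_boot all_order all_algebra.
From mathcomp Require Import reals.
From mathcomp.real_closed Require Import complex.
Set Implicit Arguments. Unset Strict Implicit. Unset Printing Implicit Defensive.
Import Order.TTheory GRing.Theory Num.Theory.
Local Open Scope ring_scope.

Lemma blk_lt (d n : nat) (k : 'I_(d * n)) : (k %/ n < d)%N.
Proof.
case: n k => [|n] k; first by case: k => k; rewrite muln0.
by rewrite ltn_divLR // ltn_ord.
Qed.

Lemma pos_lt (d n : nat) (k : 'I_(d * n)) : (k %% n < n)%N.
Proof.
case: n k => [|n] k; first by case: k => k; rewrite muln0.
by rewrite ltn_pmod.
Qed.

Lemma bidx_lt (d n : nat) (p : 'I_d) (i : 'I_n) : (p * n + i < d * n)%N.
Proof.
have hp := ltn_ord p; have hi := ltn_ord i.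
apply: (@leq_trans (p * n + n)); first by rewrite ltn_add2l.
by rewrite -mulSnr leq_mul2r hp orbT.
Qed.

(* block number (0-based) and position inside the block of a global index *)
Definition blk (d n : nat) (k : 'I_(d * n)) : 'I_d := Ordinal (blk_lt k).
Definition pos (d n : nat) (k : 'I_(d * n)) : 'I_n := Ordinal (pos_lt k).
Definition bidx (d n : nat) (p : 'I_d) (i : 'I_n) : 'I_(d * n) :=
  Ordinal (bidx_lt p i).

Lemma last_lt (d : nat) (hd : (0 < d)%N) : (d.-1 < d)%N.
Proof. by rewrite ltn_predL. Qed.
Definition first_blk (d : nat) (hd : (0 < d)%N) : 'I_d := Ordinal hd.
Definition last_blk (d : nat) (hd : (0 < d)%N) : 'I_d := Ordinal (last_lt hd).

Definition vblock (R : Type) (d n : nat) (v : 'cV[R]_(d * n)) (p : 'I_d)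
  : 'cV[R]_n := \col_i v (bidx p i) 0.

Definition mxle (R : numDomainType) (m k : nat) (A B : 'M[R]_(m, k)) : Prop :=
  forall i j, A i j <= B i j.
Definition mxpos (R : numDomainType) (m k : nat) (A : 'M[R]_(m, k)) : Prop :=
  forall i j, 0 < A i j.

(* ---- irreducibility: no nonempty proper index set S with A_ij = 0 for all
   i in S, j not in S (equivalently, A is not permutation-similar to a block
   triangular matrix) ---- *)
Definition irreducible_mx (R : numDomainType) (n : nat) (A : 'M[R]_n) : Prop :=
  forall S : {set 'I_n}, S != set0 -> S != setT ->
    exists i, exists j, [/\ i \in S, j \notin S & A i j != 0].

Definition is_splitting (R : numDomainType) (n d : nat) (B : 'M[R]_n)
  (Bs : 'I_d -> 'M[R]_n) : Prop :=
  [/\ (0 < d)%N,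
      forall p, Bs p != 0,
      \sum_(p < d) Bs p = B &
      forall p q, p != q -> forall i j, Bs p i j * Bs q i j = 0].

(* block matrices L and U of the paper:
   L_{pq} = B_q if p > q, else O;  U_{pq} = B_q if p <= q, else O *)
Definition splitL (R : numDomainType) (n d : nat) (Bs : 'I_d -> 'M[R]_n)
  : 'M[R]_(d * n) :=
  \matrix_(k, l) (if (blk l < blk k)%N then Bs (blk l) (pos k) (pos l) else 0).
Definition splitU (R : numDomainType) (n d : nat) (Bs : 'I_d -> 'M[R]_n)
  : 'M[R]_(d * n) :=
  \matrix_(k, l) (if (blk k <= blk l)%N then Bs (blk l) (pos k) (pos l) else 0).

Definition iter_mx (R : numFieldType) (n d : nat) (Bs : 'I_d -> 'M[R]_n)
  : 'M[R]_(d * n) :=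
  invmx (1%:M - splitL Bs) *m splitU Bs.

Definition is_spectral_radius (R : rcfType) (m : nat) (A : 'M[R]_m) (r : R)
  : Prop :=
  let AC := map_mx (real_complex R) A in
  (exists z : R[i], eigenvalue AC z /\ `|z| = r%:C%C) /\
  (forall z : R[i], eigenvalue AC z -> `|z| <= r%:C%C).

(* T = (I - L)^-1 U is nonnegative because L is nonnegative and
   strictly block lower triangular.  A weak Perron-Frobenius argument gives a
   nonnegative eigenvector x for lambda = rho(T): the modulus of a complex
   eigenvector for an eigenvalue of modulus lambda is a subinvariant vector w,
   the resolvent R(t) of T is nonnegative for t > lambda, and the leading
   coefficient of the pole of R(t) w at lambda is the eigenvector.  Writing
   g_p = B_p alpha_p, the equation U x = lambda (I - L) x reads blockwise
   lambda alpha_p = sum_(q >= p) g_q + lambda sum_(q < p) g_q, hence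
   lambda alpha_(p+1) = lambda alpha_p + (lambda - 1) g_p and
   lambda (lambda alpha_1) = lambda alpha_d + (lambda - 1) g_d, which give the
   monotonicity according to the sign of lambda - 1.  Finally the blocks are
   comparable to alpha_1, so B_J alpha_1 vanishes wherever alpha_1 does and
   irreducibility forces x > 0. *)

From HB Require Import structures.
From mathcomp Require Import all_boot all_order all_algebra.
From mathcomp Require Import reals.
From mathcomp.real_closed Require Import complex polyrcf.
From mathcomp Require Import ring lra zify.
From mathcomp Require boolp classical_sets.
Set Implicit Arguments. Unset Strict Implicit. Unset Printing Implicit Defensive.
Import Order.TTheory GRing.Theory Num.Theory.
Local Open Scope ring_scope.

(** * Nonnegative matrices *)

Definition mxge0 (R : numDomainType) (p q : nat) (A : 'M[R]_(p, q)) : Prop :=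
  forall i j, 0 <= A i j.

Definition mx_l1 (R : numDomainType) (p q : nat) (A : 'M[R]_(p, q)) : R :=
  \sum_i \sum_j `|A i j|.

Section NonnegativeMatrices.
Variable R : realFieldType.

Lemma mxge0_mul (p q s : nat) (A : 'M[R]_(p, q)) (B : 'M[R]_(q, s)) :
  mxge0 A -> mxge0 B -> mxge0 (A *m B).
Proof. by move=> A0 B0 i j; rewrite mxE sumr_ge0 // => k _; rewrite mulr_ge0. Qed.

Lemma mxge0Z (p q : nat) (a : R) (A : 'M[R]_(p, q)) :
  0 <= a -> mxge0 A -> mxge0 (a *: A).
Proof. by move=> a0 A0 i j; rewrite mxE mulr_ge0. Qed.

Lemma mx_l1_ge0 (p q : nat) (A : 'M[R]_(p, q)) : 0 <= mx_l1 A.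
Proof. by rewrite sumr_ge0 // => i _; rewrite sumr_ge0. Qed.

Lemma mx_l1_row (p q : nat) (A : 'M[R]_(p, q)) i : \sum_j `|A i j| <= mx_l1 A.
Proof.
rewrite /mx_l1 (bigD1 i) //= lerDl.
by rewrite sumr_ge0 // => k _; rewrite sumr_ge0.
Qed.

Lemma mx_l1D (p q : nat) (A B : 'M[R]_(p, q)) : mx_l1 (A + B) <= mx_l1 A + mx_l1 B.
Proof.
rewrite /mx_l1 -big_split ler_sum // => i _; rewrite -big_split ler_sum // => j _.
by rewrite mxE ler_normD.
Qed.

Lemma mx_l1Z (p q : nat) (a : R) (A : 'M[R]_(p, q)) : mx_l1 (a *: A) = `|a| * mx_l1 A.
Proof.
rewrite /mx_l1 mulr_sumr; apply: eq_bigr => i _; rewrite mulr_sumr.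
by apply: eq_bigr => j _; rewrite mxE normrM.
Qed.

Lemma mx_l1_mul (p q s : nat) (A : 'M[R]_(p, q)) (B : 'M[R]_(q, s)) :
  mx_l1 (A *m B) <= mx_l1 A * mx_l1 B.
Proof.
apply: (@le_trans _ _ (\sum_i \sum_k `|A i k| * \sum_j `|B k j|)).
  apply: ler_sum => i _.
  under [X in _ <= X]eq_bigr do rewrite mulr_sumr.
  rewrite exchange_big ler_sum // => j _; rewrite mxE.
  by apply: le_trans (ler_norm_sum _ _ _) _; rewrite ler_sum // => k _; rewrite normrM.
rewrite mulr_suml ler_sum // => i _; rewrite mulr_suml ler_sum // => k _.
by rewrite ler_wpM2l // mx_l1_row.
Qed.

Lemma mxge0_neq0_gt0 (p q : nat) (A : 'M[R]_(p, q)) :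
  mxge0 A -> A != 0 -> exists i j, 0 < A i j.
Proof.
move=> A_ge0 A_neq0; apply: boolp.contrapT => A_le0; move/negP: A_neq0; apply.
apply/eqP/matrixP => i j; apply/eqP; rewrite mxE eq_le A_ge0 andbT leNgt.
by apply/negP => Aij; apply: A_le0; exists i, j.
Qed.

End NonnegativeMatrices.

Lemma mxle_refl (R : numDomainType) (p q : nat) (A : 'M[R]_(p, q)) : mxle A A.
Proof. by move=> i j. Qed.

Lemma mxle_trans (R : numDomainType) (p q : nat) (A B C : 'M[R]_(p, q)) :
  mxle A B -> mxle B C -> mxle A C.
Proof. by move=> AB BC i j; apply: le_trans (AB i j) (BC i j). Qed.

Lemma mxge0_mxle0 (R : numDomainType) (p q : nat) (A : 'M[R]_(p, q)) : mxle 0 A -> mxge0 A.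
Proof. by move=> A_ge0 i j; have := A_ge0 i j; rewrite mxE. Qed.

Lemma mxle_mul2l (R : numDomainType) (p q s : nat) (A : 'M[R]_(p, q)) (B C : 'M[R]_(q, s)) :
  mxge0 A -> mxle B C -> mxle (A *m B) (A *m C).
Proof. by move=> A_ge0 BC i j; rewrite !mxE ler_sum // => k _; rewrite ler_wpM2l. Qed.

Lemma invmx_mul (R : comUnitRingType) (m : nat) (A B : 'M[R]_m) :
  A \in unitmx -> B \in unitmx -> invmx (A *m B) = invmx B *m invmx A.
Proof.
move=> UA UB; have UAB : A *m B \in unitmx by rewrite unitmx_mul UA.
have ABY : A *m B *m (invmx B *m invmx A) = 1%:M by rewrite mulmxA mulmxK // mulmxV.
by rewrite -[LHS]mulmx1 -ABY mulmxA mulVmx // mul1mx.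
Qed.

Section Substochastic.
Variables (R : realFieldType) (m : nat) (P : 'M[R]_m).
Hypotheses (P_ge0 : mxge0 P) (P_rows : forall i, \sum_j P i j < 1).

(* Minimum principle: at a row where a column of y attains its minimum, a
   negative minimum would make that row of (1 - P) y negative. *)
Lemma I_sub_solution_ge0 (c : nat) (y : 'M[R]_(m, c)) :
  mxge0 ((1%:M - P) *m y) -> mxge0 y.
Proof.
move=> Py0 i j; rewrite leNgt; apply/negP => yij_lt0.
have [i0 _ y_min] := @arg_minP _ R 'I_m i xpredT (fun k => y k j) isT.
have yi0_lt0 : y i0 j < 0 := le_lt_trans (y_min i isT) yij_lt0.
have := Py0 i0 j; rewrite mulmxBl mul1mx !mxE.
have : (\sum_k P i0 k) * y i0 j <= \sum_k P i0 k * y k j.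
  by rewrite mulr_suml ler_sum // => k _; rewrite ler_wpM2l ?y_min.
have := P_rows i0; set s := \sum_k _; set t := \sum_k _ => s_lt1 st Pyi0.
nra.
Qed.

Lemma I_sub_unitmx : 1%:M - P \in unitmx.
Proof.
rewrite -unitmx_tr -row_free_unit; apply: inj_row_free => v vP0.
have Pv0 : (1%:M - P) *m v^T = 0 by apply: trmx_inj; rewrite trmx_mul trmxK vP0 trmx0.
have v_ge0 : mxge0 v^T by apply: I_sub_solution_ge0; rewrite Pv0 => i j; rewrite mxE.
have Nv_ge0 : mxge0 (- v^T).
  by apply: I_sub_solution_ge0; rewrite mulmxN Pv0 oppr0 => i j; rewrite mxE.
apply/matrixP => i j; apply/eqP; rewrite mxE eq_le.
by have := v_ge0 j i; have := Nv_ge0 j i; rewrite !mxE oppr_ge0 => -> ->.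
Qed.

Lemma invmx_I_sub_ge0 : mxge0 (invmx (1%:M - P)).
Proof.
by apply: I_sub_solution_ge0; rewrite mulmxV ?I_sub_unitmx // => i j; rewrite mxE.
Qed.

End Substochastic.

Section StrictlyLowerTriangular.
Variables (R : numFieldType) (N : nat) (L : 'M[R]_N).
Hypothesis L_strict : forall k l : 'I_N, (k <= l)%N -> L k l = 0.

Lemma I_sub_strict_lower_unitmx : 1%:M - L \in unitmx.
Proof.
have trig : is_trig_mx (1%:M - L).
  apply/is_trig_mxP => i j ij; rewrite !mxE L_strict ?(ltnW ij) // subr0.
  by case: eqP ij => // ->; rewrite ltnn.
rewrite unitmxE (det_trig trig) big1 ?unitr1 // => i _.
by rewrite !mxE eqxx L_strict // subr0.
Qed.

Hypothesis L_ge0 : mxge0 L.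

(* Forward substitution: row k of y is row k of (1 - L) y plus a nonnegative
   combination of the rows above it. *)
Lemma I_sub_strict_lower_solution_ge0 (c : nat) (y : 'M[R]_(N, c)) :
  mxge0 ((1%:M - L) *m y) -> mxge0 y.
Proof.
move=> b0 k j; have [K] := ubnP k; elim: K k => // K IH k kK.
have -> : y k j = ((1%:M - L) *m y) k j + \sum_l L k l * y l j.
  by rewrite mulmxBl mul1mx !mxE addrNK.
rewrite addr_ge0 // sumr_ge0 // => l _.
have [lk|kl] := ltnP l k; last by rewrite L_strict // mul0r.
by rewrite mulr_ge0 // IH // (leq_trans lk).
Qed.

Lemma invmx_I_sub_strict_lower_ge0 : mxge0 (invmx (1%:M - L)).
Proof.
apply: I_sub_strict_lower_solution_ge0.
by rewrite mulmxV ?I_sub_strict_lower_unitmx // => i j; rewrite mxE ler0n.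
Qed.

End StrictlyLowerTriangular.

(** * Resolvents of nonnegative matrices *)

Definition resolvent (R : fieldType) (m : nat) (A : 'M[R]_m) (t : R) : 'M[R]_m :=
  invmx (t%:M - A).

Section Resolvent.
Variables (R : realFieldType) (m : nat) (A : 'M[R]_m).

Lemma resolvent_identity s t :
  s%:M - A \in unitmx -> t%:M - A \in unitmx ->
  resolvent A s - resolvent A t = (t - s) *: (resolvent A s *m resolvent A t).
Proof.
move=> Us Ut; rewrite /resolvent.
set Rs := invmx (s%:M - A); set Rt := invmx (t%:M - A).
rewrite {1}(_ : Rs = Rs *m (t%:M - A) *m Rt); last by rewrite -mulmxA mulmxV // mulmx1.
have -> : t%:M - A = (s%:M - A) + (t - s)%:M.
  by rewrite addrAC -raddfD /= [s + _]addrC subrK.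
rewrite mulmxDr mulVmx // mul_mx_scalar mulmxDl mul1mx -scalemxAl.
by rewrite addrC addKr.
Qed.

(* (s - dl) - A = (s - A)(1 - dl R(s)), and dl R(s) has row sums below 1. *)
Lemma resolvent_ge0_shift s dl :
  s%:M - A \in unitmx -> mxge0 (resolvent A s) -> 0 <= dl ->
  dl * mx_l1 (resolvent A s) < 1 ->
  (s - dl)%:M - A \in unitmx /\ mxge0 (resolvent A (s - dl)).
Proof.
move=> Us Rs_ge0 dl_ge0 dl_small; set P := dl *: resolvent A s.
have P_ge0 : mxge0 P by apply: mxge0Z.
have P_rows i : \sum_j P i j < 1.
  under eq_bigr do rewrite mxE; rewrite -mulr_sumr; apply: le_lt_trans dl_small.
  rewrite ler_wpM2l //; apply: le_trans (mx_l1_row _ i).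
  by rewrite ler_sum // => j _; rewrite ler_norm.
have E : (s - dl)%:M - A = (s%:M - A) *m (1%:M - P).
  by rewrite mulmxBr mulmx1 -scalemxAr mulmxV // scalemx1 addrAC -raddfB.
have Us' : (s - dl)%:M - A \in unitmx by rewrite E unitmx_mul Us I_sub_unitmx.
split => //; rewrite /resolvent E invmx_mul ?I_sub_unitmx //.
exact: mxge0_mul (invmx_I_sub_ge0 P_ge0 P_rows) Rs_ge0.
Qed.

Lemma mx_l1_resolvent_le s e :
  s%:M - A \in unitmx -> (s + e)%:M - A \in unitmx -> 0 <= e ->
  2 * e * mx_l1 (resolvent A s) <= 1 ->
  mx_l1 (resolvent A (s + e)) <= 2 * mx_l1 (resolvent A s).
Proof.
move=> Us Ue e_ge0 e_small.
have := resolvent_identity Us Ue; rewrite [s + e - s]addrC addKr.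
set Rs := resolvent A s; set Re := resolvent A (s + e) => RsRe.
have b_le : mx_l1 Re <= mx_l1 Rs + e * (mx_l1 Rs * mx_l1 Re).
  have {1}-> : Re = Rs - e *: (Rs *m Re) by rewrite -RsRe opprB addrC subrK.
  apply: le_trans (mx_l1D _ _) _; rewrite -scaleN1r !mx_l1Z normrN normr1 mul1r.
  by rewrite ger0_norm // lerD2l ler_wpM2l // mx_l1_mul.
have := mx_l1_ge0 Rs; have := mx_l1_ge0 Re; nra.
Qed.

(* For small e the shift lemma applies at s + e with step e, since
   mx_l1_resolvent_le keeps the norm of R(s + e) bounded. *)
Lemma resolvent_ge0_left_limit s :
  (forall u, s <= u -> u%:M - A \in unitmx) -> (forall u, s < u -> mxge0 (resolvent A u)) ->
  mxge0 (resolvent A s).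
Proof.
move=> U R_ge0; set a := mx_l1 (resolvent A s); have a_ge0 : 0 <= a := mx_l1_ge0 _.
pose e := (4 * (a + 1))^-1.
have e_gt0 : 0 < e by rewrite invr_gt0; lra.
have ea : 4 * (a + 1) * e = 1 by rewrite mulfV // gt_eqF //; lra.
have ea_ge0 : 0 <= e * a by rewrite mulr_ge0 // ltW.
have se : s < s + e by lra.
have Ue := U _ (ltW se).
have := mx_l1_resolvent_le (U _ (lexx s)) Ue (ltW e_gt0); rewrite -/a => /(_ ltac:(lra)) b_le.
have eb : e * mx_l1 (resolvent A (s + e)) <= e * (2 * a) := ler_wpM2l (ltW e_gt0) b_le.
have [|_] := resolvent_ge0_shift Ue (R_ge0 _ se) (ltW e_gt0); first lra.
by rewrite addrK.
Qed.

Hypothesis A_ge0 : mxge0 A.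

Lemma resolvent_ge0_large t :
  \sum_i \sum_j A i j < t -> t%:M - A \in unitmx /\ mxge0 (resolvent A t).
Proof.
move=> At; have t_gt0 : 0 < t.
  by apply: le_lt_trans At; rewrite sumr_ge0 // => i _; rewrite sumr_ge0.
set P := t^-1 *: A.
have P_ge0 : mxge0 P by apply: mxge0Z; rewrite ?invr_ge0 ?ltW.
have P_rows i : \sum_j P i j < 1.
  under eq_bigr do rewrite mxE; rewrite -mulr_sumr ltr_pdivrMl // mulr1.
  apply: le_lt_trans At; rewrite [leRHS](bigD1 i) //= lerDl.
  by rewrite sumr_ge0 // => k _; rewrite sumr_ge0.
have E : t%:M - A = t *: (1%:M - P).
  by rewrite scalerBr scalerA mulfV ?gt_eqF // scale1r scalemx1.
have Ut : t%:M - A \in unitmx by rewrite E unitmxZ ?unitfE ?gt_eqF ?I_sub_unitmx.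
split => //; rewrite /resolvent E invmxZ -?E //.
by apply: mxge0Z (invmx_I_sub_ge0 P_ge0 P_rows); rewrite invr_ge0 ltW.
Qed.

End Resolvent.

(* If some resolvent beyond r had a negative entry, let s be the supremum of
   such points: the resolvent is nonnegative beyond s, hence at s, hence
   slightly below s, contradicting the choice of s. *)
Lemma resolvent_ge0 (R : realType) (m : nat) (A : 'M[R]_m) (r : R) :
  mxge0 A -> (forall t, r < t -> t%:M - A \in unitmx) ->
  forall t, r < t -> mxge0 (resolvent A t).
Proof.
move=> A_ge0 U t rt; apply: boolp.contrapT => Rt_neg.
pose E u := r < u /\ ~ mxge0 (resolvent A u).
pose S := \sum_i \sum_j A i j.
have E_ub u : E u -> u <= S + 1.
  move=> [_ Ru]; rewrite leNgt; apply/negP => Su; apply: Ru.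
  have Su' : S < u by lra.
  by case: (resolvent_ge0_large A_ge0 Su').
have supE : classical_sets.has_sup E by split; [exists t | exists (S + 1) => u /E_ub].
set s := sup E.
have ts : t <= s by apply: sup_upper_bound.
have rs : r < s by lra.
have above u : s < u -> mxge0 (resolvent A u).
  move=> su; apply: boolp.contrapT => Ru.
  have : u <= s by apply: sup_upper_bound => //; split => //; lra.
  lra.
have Rs_ge0 := resolvent_ge0_left_limit (fun u su => U u (lt_le_trans rs su)) above.
set a := mx_l1 (resolvent A s); have a_ge0 : 0 <= a := mx_l1_ge0 _.
pose dl := (2 * (a + 1))^-1.
have dl_gt0 : 0 < dl by rewrite invr_gt0; lra.
have dla : 2 * (a + 1) * dl = 1 by rewrite mulfV // gt_eqF //; lra.
have [u [ru Ru] su] := sup_adherent dl_gt0 supE; rewrite -/s in su.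
have us : u <= s by apply: sup_upper_bound.
have dla_ge0 : 0 <= dl * a by rewrite mulr_ge0 // ltW.
have sua : (s - u) * a <= dl * a by rewrite ler_wpM2r //; lra.
apply: Ru; have -> : u = s - (s - u) by rewrite opprB addrC subrK.
have [||//] := resolvent_ge0_shift (U _ rs) Rs_ge0 (_ : 0 <= s - u); first lra.
by rewrite -/a; lra.
Qed.

(** * Polynomials to the right of a point *)

Section PolynomialsOnTheRight.
Variable R : rcfType.

Lemma horner_ge0_right (p : {poly R}) (r : R) :
  (forall t, r < t -> 0 <= p.[t]) -> 0 <= p.[r].
Proof.
move=> p_ge0; rewrite leNgt; apply/negP => pr_lt0.
have [dd dd_gt0 p_cont] : exists2 dd, 0 < dd &
    forall y, `|y - r| < dd -> `|p.[y] - p.[r]| < - p.[r].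
  by apply: poly_cont; lra.
have : `|r + dd / 2 - r| < dd by rewrite addrAC subrr add0r ger0_norm; lra.
move/p_cont; rewrite ltr_norml => /andP[_]; have := p_ge0 (r + dd / 2); lra.
Qed.

Lemma horner_gt0_right (p : {poly R}) (r : R) :
  0 < lead_coef p -> (forall t, r < t -> ~~ root p t) ->
  forall t, r < t -> 0 < p.[t].
Proof.
move=> lc_gt0 noroot t rt; rewrite ltNge; apply/negP => pt_le0.
have [N pN] := poly_pinfty_gt_lc lc_gt0.
have tN : t <= Num.max t N by rewrite le_max lexx.
have pN_gt0 : 0 < p.[Num.max t N] by apply: lt_le_trans lc_gt0 (pN _ _); rewrite le_max lexx orbT.
have [x] : {x | x \in `[t, Num.max t N] & root p x}.
  by apply: polyrcf.poly_ivt tN _; rewrite mulr_le0_ge0 // ltW.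
rewrite in_itv /= => /andP[tx _] px.
by move: (noroot x (lt_le_trans rt tx)); rewrite px.
Qed.

Lemma horner_ge0_right_factor (g : {poly R}) (r : R) (k : nat) :
  (forall t, r < t -> 0 <= (t - r) ^+ k * g.[t]) -> 0 <= g.[r].
Proof.
move=> g_ge0; apply: horner_ge0_right => t rt.
by have := g_ge0 t rt; rewrite pmulr_rge0 // exprn_gt0 // subr_gt0.
Qed.

(* Otherwise dividing by (t - r)^mm and letting t decrease to r gives
   c f(r) <= 0. *)
Lemma root_order_lt (f g : {poly R}) (r c : R) (k mm : nat) :
  0 < c -> 0 < f.[r] ->
  (forall t, r < t -> c * ((t - r) ^+ mm * f.[t]) <= (t - r) * ((t - r) ^+ k * g.[t])) ->
  (k < mm)%N.
Proof.
move=> c_gt0 fr_gt0 fg; rewrite ltnNge; apply/negP => mk.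
pose h := ('X - r%:P) ^+ (k.+1 - mm) * g - c *: f.
have : 0 <= h.[r].
  apply: horner_ge0_right => t rt; have tr_gt0 : 0 < (t - r) ^+ mm by rewrite exprn_gt0 ?subr_gt0.
  have := fg t rt; rewrite [in X in _ <= X]mulrA -exprS -(subnKC (leqW mk)) exprD.
  rewrite -!mulrA mulrCA.
  by rewrite ler_pM2l // !hornerE subr_ge0.
rewrite !hornerE subrr expr0n subn_eq0 ltnNge mk /= mul0r sub0r oppr_ge0 leNgt.
by rewrite mulr_gt0.
Qed.

End PolynomialsOnTheRight.

Section PolynomialMatrices.
Variables (F : fieldType) (m c : nat).

Definition mx_eval (x : F) (M : 'M[{poly F}]_(m, c)) : 'M[F]_(m, c) :=
  map_mx (horner_eval x) M.

Lemma mx_evalE x M i j : mx_eval x M i j = (M i j).[x].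
Proof. by rewrite mxE. Qed.

Lemma mx_evalZ x (p : {poly F}) M : mx_eval x (p *: M) = p.[x] *: mx_eval x M.
Proof. by apply/matrixP => i j; rewrite !mxE /horner_eval hornerM. Qed.

Definition mx_size (M : 'M[{poly F}]_(m, c)) : nat := \sum_i \sum_j size (M i j).

(* Induction on the total size: while Q vanishes at x, divide it by 'X - x. *)
Lemma mx_poly_factor_root (x : F) (Q : 'M[{poly F}]_(m, c)) : Q != 0 ->
  exists k (Q' : 'M[{poly F}]_(m, c)),
    Q = ('X - x%:P) ^+ k *: Q' /\ mx_eval x Q' != 0.
Proof.
have [N] := ubnP (mx_size Q); elim: N Q => // N IH Q QN Q_neq0.
have [Qx0|Qx_neq0] := eqVneq (mx_eval x Q) 0; last by exists 0%N, Q; rewrite scale1r.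
pose Q1 := map_mx (fun f => f %/ ('X - x%:P)) Q.
have QE : Q = ('X - x%:P) *: Q1.
  apply/matrixP => i j; rewrite !mxE mulrC divpK // -root_factor_theorem.
  by rewrite rootE -mx_evalE Qx0 mxE.
have Q1_neq0 : Q1 != 0 by apply: contraNneq Q_neq0; rewrite QE => ->; rewrite scaler0.
have [i [j Qij]] : exists i j, Q i j != 0.
  apply: boolp.contrapT => Q0; move/negP: Q_neq0; apply; apply/eqP/matrixP => i j.
  by rewrite mxE; apply/eqP; apply: boolp.contrapT => Qij; apply: Q0; exists i, j; apply/negP.
have Q1_lt : (mx_size Q1 < mx_size Q)%N.
  have sizeQ1 i' j' : size (Q1 i' j') = (size (Q i' j')).-1.
    by rewrite mxE size_divp ?polyXsubC_eq0 // size_XsubC subn1.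
  rewrite /mx_size (bigD1 i) //= [X in (_ < X)%N](bigD1 i) //=.
  rewrite [\sum_(j0 < c) size (Q1 i j0)](bigD1 j) //= [\sum_(j0 < c) size (Q i j0)](bigD1 j) //=.
  rewrite -!addnA -addSn leq_add //; first by rewrite sizeQ1 prednK // lt0n size_poly_eq0.
  rewrite leq_add // leq_sum // => [j' _|i' _]; first by rewrite sizeQ1 leq_pred.
  by rewrite leq_sum // => j' _; rewrite sizeQ1 leq_pred.
have [k [Q' [Q1E Q'x]]] := IH Q1 (leq_trans Q1_lt QN) Q1_neq0.
by exists k.+1, Q'; rewrite QE Q1E scalerA exprS.
Qed.

End PolynomialMatrices.

(** * A nonnegative eigenvector for the spectral radius *)

Section ResolventNumerator.
Variables (F : fieldType) (m : nat) (A : 'M[F]_m) (w : 'cV[F]_m).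

(* The numerator of R(t) w = adj(t - A) w / det(t - A), as a polynomial in t. *)
Definition resolvent_num : 'cV[{poly F}]_m := \adj (char_poly_mx A) *m map_mx polyC w.

Lemma mx_eval_char_poly_mx t : mx_eval t (char_poly_mx A) = t%:M - A.
Proof.
apply/matrixP => i j; rewrite !mxE /horner_eval.
by case: (i == j); rewrite !hornerE.
Qed.

Lemma horner_char_poly t : (char_poly A).[t] = \det (t%:M - A).
Proof. by rewrite -mx_eval_char_poly_mx /mx_eval det_map_mx. Qed.

Lemma char_poly_mx_resolvent_num :
  char_poly_mx A *m resolvent_num = char_poly A *: map_mx polyC w.
Proof. by rewrite mulmxA mul_mx_adj mul_scalar_mx. Qed.

Lemma mx_eval_resolvent_num t : t%:M - A \in unitmx ->
  mx_eval t resolvent_num = (char_poly A).[t] *: (resolvent A t *m w).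
Proof.
move=> Ut; have -> : mx_eval t resolvent_num = \adj (t%:M - A) *m w.
  rewrite /mx_eval map_mxM map_mx_adj -/(mx_eval t _) mx_eval_char_poly_mx.
  by congr (_ *m _); apply/matrixP => i j; rewrite !mxE /= horner_evalE hornerC.
rewrite /resolvent /invmx; case: ifP => [_|]; last by rewrite Ut.
rewrite -scalemxAl scalerA horner_char_poly mulfV ?scale1r // -unitfE -unitmxE //.
Qed.

Lemma char_poly_mx_cancel (v : 'cV[{poly F}]_m) (g h : {poly F}) :
  resolvent_num = g *: v -> char_poly A = h * g -> g != 0 ->
  char_poly_mx A *m v = h *: map_mx polyC w.
Proof.
move=> qE pE g_neq0; have /matrixP Mq := char_poly_mx_resolvent_num.
apply/matrixP => i j; have := Mq i j; rewrite qE pE -scalemxAr !mxE => Mqij.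
by apply: (mulfI g_neq0); rewrite Mqij mulrCA mulrA.
Qed.

End ResolventNumerator.

Lemma char_poly_mx_root_eigen (F : fieldType) (m : nat) (A : 'M[F]_m)
    (v : 'cV[{poly F}]_m) (g : {poly F}) (u : 'cV[F]_m) (r : F) :
  char_poly_mx A *m v = g *: map_mx polyC u -> root g r ->
  A *m mx_eval r v = r *: mx_eval r v.
Proof.
move=> Mv /eqP gr; have := congr1 (mx_eval r) Mv.
rewrite mx_evalZ gr scale0r /mx_eval map_mxM -/(mx_eval r (char_poly_mx A)).
rewrite -/(mx_eval r v) mx_eval_char_poly_mx.
by rewrite mulmxBl mul_scalar_mx => /eqP; rewrite subr_eq0 => /eqP.
Qed.

Lemma resolvent_subinvariant (R : realFieldType) (m : nat) (A : 'M[R]_m) (r t : R)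
    (w : 'cV[R]_m) :
  t%:M - A \in unitmx -> mxge0 (resolvent A t) -> mxge0 (A *m w - r *: w) ->
  mxge0 ((t - r) *: (resolvent A t *m w) - w).
Proof.
move=> Ut Rt_ge0 Aw; suff -> : (t - r) *: (resolvent A t *m w) - w =
    resolvent A t *m (A *m w - r *: w) by exact: mxge0_mul.
have -> : A *m w - r *: w = (t - r) *: w - (t%:M - A) *m w.
  by rewrite mulmxBl mul_scalar_mx scalerBl opprB [RHS]addrC addrA subrK.
by rewrite mulmxBr -scalemxAr mulmxA mulVmx // mul1mx.
Qed.

Section NonnegEigenvector.
Variables (R : realType) (m : nat) (A : 'M[R]_m) (r : R) (w : 'cV[R]_m).
Hypotheses (A_ge0 : mxge0 A) (U : forall t, r < t -> t%:M - A \in unitmx).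
Hypotheses (w_ge0 : mxge0 w) (w_neq0 : w != 0) (Aw_ge0 : mxge0 (A *m w - r *: w)).

Lemma char_poly_gt0_right t : r < t -> 0 < (char_poly A).[t].
Proof.
apply: horner_gt0_right => [|u ru]; first by rewrite (monicP (char_poly_monic A)).
by rewrite rootE horner_char_poly -unitfE -unitmxE U.
Qed.

Lemma horner_resolvent_num t i : r < t ->
  (resolvent_num A w i 0).[t] = (char_poly A).[t] * (resolvent A t *m w) i 0.
Proof. by move=> rt; rewrite -mx_evalE mx_eval_resolvent_num ?U // mxE. Qed.

Lemma resolvent_num_ge0 t i : r < t -> 0 <= (resolvent_num A w i 0).[t].
Proof.
move=> rt; rewrite horner_resolvent_num //.
exact: mulr_ge0 (ltW (char_poly_gt0_right rt)) (mxge0_mul (resolvent_ge0 A_ge0 U rt) w_ge0 i 0).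
Qed.

Lemma resolvent_num_dominates t i : r < t ->
  (char_poly A).[t] * w i 0 <= (t - r) * (resolvent_num A w i 0).[t].
Proof.
move=> rt; have := resolvent_subinvariant (U rt) (resolvent_ge0 A_ge0 U rt) Aw_ge0 i 0.
rewrite mxE [X in _ + X]mxE [X in X + _]mxE subr_ge0 horner_resolvent_num // mulrCA.
by rewrite ler_pM2l ?char_poly_gt0_right.
Qed.

Lemma resolvent_num_neq0 : resolvent_num A w != 0.
Proof.
have r1 : r < r + 1 by rewrite ltrDl.
apply: contraNneq w_neq0 => q0; have := mx_eval_resolvent_num w (U r1).
rewrite q0 /mx_eval map_mx0 => /esym/eqP.
rewrite scaler_eq0 gt_eqF ?char_poly_gt0_right //= => /eqP Rw0.
by rewrite -(mulKVmx (U r1) w) -/(resolvent A _) Rw0 mulmx0.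
Qed.

(* Since (t - r) R(t) w >= w, the pole of R(t) w
   at r has order at least one, and its leading coefficient is a nonnegative
   eigenvector for r. *)
Lemma nonneg_eigenvector : exists2 x : 'cV[R]_m, mxge0 x & x != 0 /\ A *m x = r *: x.
Proof.
have [k [q' [qE q'r_neq0]]] := mx_poly_factor_root r resolvent_num_neq0.
have [mm [p' p'r pE]] := multiplicity_XsubC (char_poly A) r.
rewrite monic_neq0 ?char_poly_monic //= in p'r.
have q'E t i : (resolvent_num A w i 0).[t] = (t - r) ^+ k * (q' i 0).[t].
  by rewrite qE mxE hornerM horner_exp hornerXsubC.
have pE' t : (char_poly A).[t] = (t - r) ^+ mm * p'.[t].
  by rewrite pE hornerM horner_exp hornerXsubC mulrC.
have p'r_gt0 : 0 < p'.[r].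
  rewrite lt_def p'r /=; apply: (horner_ge0_right_factor (k := mm)) => t rt.
  by rewrite -pE' ltW ?char_poly_gt0_right.
have [i [j wij_gt0]] := mxge0_neq0_gt0 w_ge0 w_neq0; rewrite ord1 in wij_gt0.
have k_lt : (k < mm)%N.
  apply: (root_order_lt (c := w i 0) wij_gt0 p'r_gt0 (g := q' i 0)) => t rt.
  by rewrite mulrC -pE' -q'E resolvent_num_dominates.
have Mq' : char_poly_mx A *m q' = (('X - r%:P) ^+ (mm - k) * p') *: map_mx polyC w.
  apply: char_poly_mx_cancel qE _ _; last by rewrite expf_neq0 // polyXsubC_eq0.
  by rewrite pE -{1}(subnKC (ltnW k_lt)) exprD; ring.
exists (mx_eval r q'); last split => //.
  move=> a b; rewrite ord1 mx_evalE; apply: (horner_ge0_right_factor (k := k)) => t rt.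
  by rewrite -q'E resolvent_num_ge0.
apply: char_poly_mx_root_eigen Mq' _.
have [l ->] : exists l, (mm - k)%N = l.+1 by exists (mm - k).-1; rewrite prednK // subn_gt0.
by rewrite rootM root_exp_XsubC eqxx.
Qed.

End NonnegEigenvector.

Section SpectralRadius.
Variables (R : rcfType) (m : nat) (A : 'M[R]_m) (r : R).
Hypothesis rhoA : is_spectral_radius A r.

Lemma spectral_radius_ge0 : 0 <= r.
Proof. by have [[z [_ zr]] _] := rhoA; rewrite -lecR -zr normr_ge0. Qed.

Lemma spectral_radius_unitmx t : r < t -> t%:M - A \in unitmx.
Proof.
move=> rt; apply: contraT; rewrite unitmxE unitfE negbK => /det0P [v v_neq0 vA].
have : eigenvalue A t.
  apply/eigenvalueP; exists v => //.
  by move/eqP: vA; rewrite mulmxBr mul_mx_scalar subr_eq0 => /eqP <-.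
rewrite -(eigenvalue_map (real_complex R)) => /rhoA.2.
rewrite normc_def /= expr0n /= addr0 sqrtr_sqr lecR ger0_norm; last first.
  by apply: le_trans (ltW rt); exact: spectral_radius_ge0.
by rewrite leNgt rt.
Qed.

(* The entrywise modulus of a complex eigenvector for an eigenvalue of modulus
   r is a nonnegative subinvariant vector, by the triangle inequality. *)
Lemma spectral_radius_subinvariant : mxge0 A ->
  exists w : 'cV[R]_m, [/\ mxge0 w, w != 0 & mxge0 (A *m w - r *: w)].
Proof.
move=> A_ge0; have [[z [ez zr]] _] := rhoA.
pose AC := map_mx (real_complex R) A.
have : \det (AC - z%:M)^T == 0.
  rewrite det_tr; move: ez; rewrite /eigenvalue /eigenspace; apply: contraNT => h.
  by rewrite kermx_eq0 row_free_unit unitmxE unitfE.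
move=> /det0P [v v_neq0 vAz]; set u := v^T.
have Au : AC *m u = z *: u.
  have : (AC - z%:M) *m u = 0 by apply: trmx_inj; rewrite trmx_mul trmxK vAz trmx0.
  by rewrite mulmxBl mul_scalar_mx => /eqP; rewrite subr_eq0 => /eqP.
have u_neq0 : u != 0 by apply: contraNneq v_neq0 => u0; rewrite -[v]trmxK -/u u0 trmx0.
pose w := \col_i complex.Re `|u i 0|.
have wE i : (w i 0)%:C%C = `|u i 0| by rewrite mxE RRe_real // normr_real.
clearbody u w.
exists w; split.
- by move=> i j; rewrite ord1 -lecR wE normr_ge0.
- apply: contraNneq u_neq0 => w0; apply/eqP/matrixP => i j.
  by rewrite ord1 [RHS]mxE; apply/eqP; rewrite -normr_eq0 -wE w0 mxE.
- move=> i j; rewrite ord1 !mxE subr_ge0 -lecR rmorphM /= wE -zr -normrM.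
  have := congr1 (fun M : 'M[R[i]]_(m, 1) => M i 0) Au; rewrite /= !mxE => <-.
  rewrite rmorph_sum; apply: le_trans (ler_norm_sum _ _ _) _.
  rewrite le_eqVlt; apply/orP; left; apply/eqP; apply: eq_bigr => k _.
  by rewrite normrM !mxE rmorphM /= wE ger0_norm // ler0c.
Qed.

End SpectralRadius.

(** * Block structure of the iteration matrix *)

Section BlockIndexing.
Variables d n : nat.

Lemma blk_bidx (p : 'I_d) (i : 'I_n) : blk (bidx p i) = p.
Proof.
apply: val_inj => /=; have n_gt0 : (0 < n)%N by apply: leq_ltn_trans (ltn_ord i).
by rewrite divnMDl // divn_small // addn0.
Qed.

Lemma pos_bidx (p : 'I_d) (i : 'I_n) : pos (bidx p i) = i.
Proof. by apply: val_inj => /=; rewrite modnMDl modn_small. Qed.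

Lemma bidx_blk_pos (k : 'I_(d * n)) : bidx (blk k) (pos k) = k.
Proof. by apply: val_inj => /=; rewrite -divn_eq. Qed.

Lemma sum_blocks (V : nmodType) (F : 'I_(d * n) -> V) :
  \sum_k F k = \sum_(p < d) \sum_(i < n) F (bidx p i).
Proof.
rewrite pair_bigA /= (reindex (fun pi : 'I_d * 'I_n => bidx pi.1 pi.2)) //=.
apply: onW_bij; exists (fun k => (blk k, pos k)) => [[p i]|k] /=.
  by rewrite blk_bidx pos_bidx.
by rewrite bidx_blk_pos.
Qed.

Lemma vblock_mulmx (R : numDomainType) (M : 'M[R]_(d * n)) (x : 'cV[R]_(d * n)) p :
  vblock (M *m x) p =
  \sum_(q < d) \matrix_(i, j) (M (bidx p i) (bidx q j)) *m vblock x q.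
Proof.
apply/matrixP => i j; rewrite ord1 summxE !mxE sum_blocks.
by apply: eq_bigr => q _; rewrite mxE; apply: eq_bigr => k _; rewrite !mxE.
Qed.

End BlockIndexing.

Section SplittingBlocks.
Variables (R : numDomainType) (n d : nat) (Bs : 'I_d -> 'M[R]_n).

Lemma vblock_splitU_mul (x : 'cV[R]_(d * n)) p :
  vblock (splitU Bs *m x) p = \sum_(q < d | (p <= q)%N) Bs q *m vblock x q.
Proof.
rewrite vblock_mulmx [RHS]big_mkcond; apply: eq_bigr => q _ /=.
case: ifP => pq; last by rewrite -(mul0mx _ (vblock x q)); congr (_ *m _);
  apply/matrixP => i j; rewrite !mxE !blk_bidx pq.
by congr (_ *m _); apply/matrixP => i j; rewrite !mxE !blk_bidx !pos_bidx pq.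
Qed.

Lemma vblock_splitL_mul (x : 'cV[R]_(d * n)) p :
  vblock (splitL Bs *m x) p = \sum_(q < d | (q < p)%N) Bs q *m vblock x q.
Proof.
rewrite vblock_mulmx [RHS]big_mkcond; apply: eq_bigr => q _ /=.
case: ifP => qp; last by rewrite -(mul0mx _ (vblock x q)); congr (_ *m _);
  apply/matrixP => i j; rewrite !mxE !blk_bidx qp.
by congr (_ *m _); apply/matrixP => i j; rewrite !mxE !blk_bidx !pos_bidx qp.
Qed.

Lemma splitL_strict_lower (k l : 'I_(d * n)) : (k <= l)%N -> splitL Bs k l = 0.
Proof. by move=> kl; rewrite mxE ltnNge leq_div2r. Qed.

End SplittingBlocks.

Lemma ord_succ_chain (T : Type) (rel : T -> T -> Prop) (d : nat) (f : 'I_d -> T) :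
  (forall a, rel a a) -> (forall a b c, rel a b -> rel b c -> rel a c) ->
  (forall p q : 'I_d, q = p.+1 :> nat -> rel (f p) (f q)) ->
  forall p q : 'I_d, (p <= q)%N -> rel (f p) (f q).
Proof.
move=> rel_refl rel_trans succ p q; have [k] := ubnP (q - p); elim: k q => // k IH q qpk pq.
have [/val_inj <-//|q_neq_p] := eqVneq (q : nat) p.
have pq' : (p < q)%N by rewrite ltn_neqAle eq_sym q_neq_p.
have q'_lt : (q.-1 < d)%N by rewrite (leq_ltn_trans (leq_pred q)).
apply: (rel_trans _ (f (Ordinal q'_lt))).
  by apply: IH => /=; lia.
by apply: succ => /=; rewrite prednK // (leq_ltn_trans _ pq').
Qed.

(* The zero set of y has no A-edge leaving it, so by irreducibility it is
   empty. *)
Lemma irreducible_mx_pos (R : numDomainType) (n : nat) (A : 'M[R]_n) (y : 'cV[R]_n) :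
  irreducible_mx A -> mxge0 A -> mxge0 y -> y != 0 ->
  (forall i, y i 0 = 0 -> (A *m y) i 0 = 0) -> mxpos y.
Proof.
move=> A_irr A_ge0 y_ge0 y_neq0 Ay_zero i j; rewrite ord1 lt_def y_ge0 andbT.
apply/negP => /eqP yi0; pose S := [set k | y k 0 == 0].
have S_neq0 : S != set0 by apply/set0Pn; exists i; rewrite inE yi0.
have S_neqT : S != setT.
  apply: contraNneq y_neq0 => ST; apply/eqP/matrixP => k l; rewrite ord1 mxE.
  by have := in_setT k; rewrite -ST inE => /eqP.
have [k [l [kS lS Akl]]] := A_irr S S_neq0 S_neqT; move: kS lS; rewrite !inE => /eqP yk0 yl.
have := Ay_zero k yk0; rewrite mxE => /(psumr_eq0P (fun l _ => mulr_ge0 (A_ge0 k l) (y_ge0 l 0))).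
by move=> /(_ l isT)/eqP; rewrite mulf_eq0 (negbTE Akl) (negbTE yl).
Qed.

Lemma eigen_step_le (R : realDomainType) (lambda a b c : R) :
  0 < lambda -> 0 <= c -> lambda * a = lambda * b + (lambda - 1) * c ->
  (lambda <= 1 -> a <= b) /\ (1 <= lambda -> b <= a).
Proof.
move=> l_gt0 c_ge0 E; split => l1; rewrite -(ler_pM2l l_gt0) E.
  by rewrite gerDl mulr_le0_ge0 // subr_le0.
by rewrite lerDl mulr_ge0 // subr_ge0.
Qed.

Lemma scale_eq_entry (R : pzRingType) (p q : nat) (a b c : R) (A B C : 'M[R]_(p, q)) i j :
  a *: A = b *: B + c *: C -> a * A i j = b * B i j + c * C i j.
Proof. by move/matrixP/(_ i j); rewrite !mxE. Qed.

Section Splitting.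
Variables (R : realFieldType) (n d : nat) (BJ : 'M[R]_n) (Bs : 'I_d -> 'M[R]_n).
Hypotheses (BJ_ge0 : mxle 0 BJ) (Bs_split : is_splitting BJ Bs).

(* Where a part is nonzero, all other parts vanish, so it agrees with BJ. *)
Lemma splitting_ge0 p : mxge0 (Bs p).
Proof.
have [_ _ Bsum Bdisj] := Bs_split; move=> i j.
have [->//|Bpij] := eqVneq (Bs p i j) 0.
have -> : Bs p i j = BJ i j.
  rewrite -Bsum summxE (bigD1 p) //= big1 ?addr0 // => q qp.
  by have /eqP := Bdisj q p qp i j; rewrite mulf_eq0 (negbTE Bpij) orbF => /eqP.
by have := BJ_ge0 i j; rewrite mxE.
Qed.

Lemma splitL_ge0 : mxge0 (splitL Bs).
Proof. by move=> k l; rewrite mxE; case: ifP => // _; apply: splitting_ge0. Qed.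

Lemma splitU_ge0 : mxge0 (splitU Bs).
Proof. by move=> k l; rewrite mxE; case: ifP => // _; apply: splitting_ge0. Qed.

Lemma iter_mx_ge0 : mxge0 (iter_mx Bs).
Proof.
apply: mxge0_mul splitU_ge0.
exact: invmx_I_sub_strict_lower_ge0 (@splitL_strict_lower _ _ _ Bs) splitL_ge0.
Qed.

End Splitting.

Section EigenvectorBlocks.
Variables (R : realFieldType) (n d : nat) (hd : (0 < d)%N).
Variables (BJ : 'M[R]_n) (Bs : 'I_d -> 'M[R]_n) (lambda : R) (x : 'cV[R]_(d * n)).
Hypotheses (BJ_ge0 : mxle 0 BJ) (Bs_split : is_splitting BJ Bs).
Hypotheses (lambda_gt0 : 0 < lambda) (x_ge0 : mxge0 x).
Hypothesis Tx : iter_mx Bs *m x = lambda *: x.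

Let g q := Bs q *m vblock x q.

Let vblock_ge0 p : mxge0 (vblock x p).
Proof. by move=> i j; rewrite mxE. Qed.

Let g_ge0 q : mxge0 (g q).
Proof. exact: mxge0_mul (splitting_ge0 BJ_ge0 Bs_split q) (vblock_ge0 q). Qed.

Lemma eigen_splitting : splitU Bs *m x = lambda *: (x - splitL Bs *m x).
Proof.
have U := I_sub_strict_lower_unitmx (@splitL_strict_lower _ _ _ Bs).
have := congr1 (mulmx (1%:M - splitL Bs)) Tx.
by rewrite /iter_mx !mulmxA mulmxV // mul1mx => ->; rewrite -scalemxAr mulmxBl mul1mx.
Qed.

Lemma eigen_block p :
  lambda *: vblock x p = \sum_(q < d | (p <= q)%N) g q + lambda *: \sum_(q < d | (q < p)%N) g q.
Proof.
have := congr1 (fun v : 'cV[R]_(d * n) => vblock v p) eigen_splitting.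
have -> : vblock (lambda *: (x - splitL Bs *m x)) p =
    lambda *: (vblock x p - vblock (splitL Bs *m x) p) by apply/matrixP => i j; rewrite !mxE.
by rewrite vblock_splitU_mul vblock_splitL_mul => ->; rewrite scalerBr subrK.
Qed.

Lemma eigen_block_succ (p q : 'I_d) : q = p.+1 :> nat ->
  lambda *: vblock x q = lambda *: vblock x p + (lambda - 1) *: g p.
Proof.
move=> qE.
have geS : \sum_(q' < d | (p <= q')%N) g q' = g p + \sum_(q' < d | (q <= q')%N) g q'.
  rewrite (bigD1 p) //=; congr (_ + _); apply: eq_bigl => q'.
  by rewrite qE ltn_neqAle andbC; congr (_ && _); rewrite eq_sym.
have ltS : \sum_(q' < d | (q' < q)%N) g q' = g p + \sum_(q' < d | (q' < p)%N) g q'.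
  rewrite (bigD1 p) /= ?qE //; congr (_ + _); apply: eq_bigl => q'.
  by rewrite ltnS ltn_neqAle andbC.
rewrite !eigen_block geS ltS; apply/matrixP => i j; rewrite !mxE; ring.
Qed.

Lemma eigen_first_block : lambda *: vblock x (first_blk hd) = \sum_(q < d) g q.
Proof. by rewrite eigen_block [X in _ *: X]big_pred0 // scaler0 addr0; apply: eq_bigl. Qed.

Lemma eigen_block_wrap :
  lambda *: (lambda *: vblock x (first_blk hd)) =
  lambda *: vblock x (last_blk hd) + (lambda - 1) *: g (last_blk hd).
Proof.
have lastE (q : 'I_d) : (last_blk hd <= q)%N = (q == last_blk hd).
  have q_le : (q <= d.-1)%N by rewrite -ltnS prednK.
  by rewrite -val_eqE /= eqn_leq q_le.
have allE : \sum_(q < d) g q = g (last_blk hd) + \sum_(q < d | (q < last_blk hd)%N) g q.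
  rewrite (bigD1 (last_blk hd)) //=; congr (_ + _); apply: eq_bigl => q.
  by rewrite ltn_neqAle -ltnS prednK // ltn_ord andbT.
rewrite eigen_first_block allE eigen_block (eq_bigl _ _ lastE) big_pred1_eq.
by apply/matrixP => i j; rewrite !mxE; ring.
Qed.

Lemma blocks_nonincreasing : lambda <= 1 ->
  forall p q : 'I_d, q = p.+1 :> nat -> mxle (vblock x q) (vblock x p).
Proof.
move=> l1 p q qE i j.
have := scale_eq_entry i j (eigen_block_succ qE).
by case/(eigen_step_le lambda_gt0 (g_ge0 p i j)) => /(_ l1).
Qed.

Lemma blocks_nondecreasing : 1 <= lambda ->
  forall p q : 'I_d, q = p.+1 :> nat -> mxle (vblock x p) (vblock x q).
Proof.
move=> l1 p q qE i j.
have := scale_eq_entry i j (eigen_block_succ qE).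
by case/(eigen_step_le lambda_gt0 (g_ge0 p i j)) => _ /(_ l1).
Qed.

Lemma last_block_ge : lambda <= 1 ->
  mxle (lambda *: vblock x (first_blk hd)) (vblock x (last_blk hd)).
Proof.
move=> l1 i j.
by have [/(_ l1)] := eigen_step_le lambda_gt0 (g_ge0 _ i j) (scale_eq_entry i j eigen_block_wrap).
Qed.

Lemma last_block_le : 1 <= lambda ->
  mxle (vblock x (last_blk hd)) (lambda *: vblock x (first_blk hd)).
Proof.
move=> l1 i j.
by have [_ /(_ l1)] := eigen_step_le lambda_gt0 (g_ge0 _ i j) (scale_eq_entry i j eigen_block_wrap).
Qed.

Lemma blocks_comparable : exists c C : R, 0 < c /\
  forall p, mxle (c *: vblock x (first_blk hd)) (vblock x p) /\
            mxle (vblock x p) (C *: vblock x (first_blk hd)).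
Proof.
have p_last (p : 'I_d) : (p <= last_blk hd)%N by rewrite /= -ltnS prednK.
have [l1|l1] := leP lambda 1.
  have chain := ord_succ_chain (rel := fun u v => mxle v u) (f := vblock x) (@mxle_refl _ _ _)
    (fun u v w uv vw => mxle_trans vw uv) (blocks_nonincreasing l1).
  exists lambda, 1; split => // p; split; last by rewrite scale1r; apply: chain.
  exact: mxle_trans (last_block_ge l1) (chain _ _ (p_last p)).
have chain := ord_succ_chain (rel := @mxle R n 1) (f := vblock x) (@mxle_refl _ _ _)
  (@mxle_trans _ _ _) (blocks_nondecreasing (ltW l1)).
exists 1, lambda; split => // p; split; first by rewrite scale1r; apply: chain.
exact: mxle_trans (chain _ _ (p_last p)) (last_block_le (ltW l1)).
Qed.

Lemma first_block_subinvariant (c : R) :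
  (forall p, mxle (c *: vblock x (first_blk hd)) (vblock x p)) ->
  mxle (c *: (BJ *m vblock x (first_blk hd))) (lambda *: vblock x (first_blk hd)).
Proof.
move=> lower; have [_ _ Bsum _] := Bs_split.
rewrite eigen_first_block -Bsum mulmx_suml scaler_sumr => i j; rewrite !summxE.
apply: ler_sum => q _; rewrite scalemxAr.
exact: mxle_mul2l (splitting_ge0 BJ_ge0 Bs_split q) (lower q) i j.
Qed.

Lemma eigenvector_pos : irreducible_mx BJ -> x != 0 -> mxpos x.
Proof.
move=> BJ_irr x_neq0; have [c [C [c_gt0 bounds]]] := blocks_comparable.
have x_blocks k : x k 0 = vblock x (blk k) (pos k) 0 by rewrite mxE bidx_blk_pos.
have first_pos : mxpos (vblock x (first_blk hd)).
  apply: irreducible_mx_pos BJ_irr (mxge0_mxle0 BJ_ge0) (vblock_ge0 _) _ _.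
    apply: contraNneq x_neq0 => b0; apply/eqP/matrixP => k j; rewrite ord1 x_blocks [RHS]mxE.
    apply/eqP; rewrite eq_le vblock_ge0 andbT.
    by have := (bounds (blk k)).2 (pos k) 0; rewrite b0 scaler0 !mxE.
  move=> i b0i; have := first_block_subinvariant (fun p => (bounds p).1) i 0.
  rewrite mxE [in X in _ <= X]mxE b0i mulr0 pmulr_rle0 // => BJb_le0.
  by apply/eqP; rewrite eq_le BJb_le0 (mxge0_mul (mxge0_mxle0 BJ_ge0) (vblock_ge0 _)).
move=> k j; rewrite ord1 x_blocks; apply: lt_le_trans ((bounds _).1 _ _).
by rewrite mxE mulr_gt0.
Qed.

End EigenvectorBlocks.

Unset Implicit Arguments.

Theorem proposition3p1 (R : realType) (n d : nat) (hd : (0 < d)%N)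
  (BJ : 'M[R]_n) (Bs : 'I_d -> 'M[R]_n) (lambda : R) :
  irreducible_mx BJ ->
  mxle 0 BJ ->
  is_splitting BJ Bs ->
  is_spectral_radius (iter_mx Bs) lambda ->
  0 < lambda ->
  exists v : 'cV[R]_(d * n),
    [/\ mxpos v,
        iter_mx Bs *m v = lambda *: v,
        lambda <= 1 ->
          [/\ mxpos (lambda *: vblock v (first_blk hd)),
              mxle (lambda *: vblock v (first_blk hd)) (vblock v (last_blk hd)) &
              forall p q : 'I_d, q = p.+1 :> nat ->
                mxle (vblock v q) (vblock v p)] &
        1 <= lambda ->
          [/\ mxpos (vblock v (first_blk hd)),
              forall p q : 'I_d, q = p.+1 :> nat ->
                mxle (vblock v p) (vblock v q) &
              mxle (vblock v (last_blk hd)) (lambda *: vblock v (first_blk hd))]].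
Proof.
move=> BJ_irr BJ_ge0 Bs_split rhoT lambda_gt0.
have T_ge0 := iter_mx_ge0 BJ_ge0 Bs_split.
have [w [w_ge0 w_neq0 Tw]] := spectral_radius_subinvariant rhoT T_ge0.
have [x x_ge0 [x_neq0 Tx]] :=
  nonneg_eigenvector T_ge0 (spectral_radius_unitmx rhoT) w_ge0 w_neq0 Tw.
have x_pos := eigenvector_pos hd BJ_ge0 Bs_split lambda_gt0 x_ge0 Tx BJ_irr x_neq0.
have first_pos : mxpos (vblock x (first_blk hd)) by move=> i j; rewrite mxE.
exists x; split => // [l1|l1]; split.
- by move=> i j; rewrite mxE mulr_gt0.
- exact: last_block_ge BJ_ge0 Bs_split lambda_gt0 x_ge0 Tx l1.
- exact: blocks_nonincreasing BJ_ge0 Bs_split lambda_gt0 x_ge0 Tx l1.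
- exact: first_pos.
- exact: blocks_nondecreasing BJ_ge0 Bs_split lambda_gt0 x_ge0 Tx l1.
- exact: last_block_le BJ_ge0 Bs_split lambda_gt0 x_ge0 Tx l1.
Qed.
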